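(* Let $\kappa\ge2$. Every tensor $P$ in $\mathrm{EE}_\kappa(((a,b),c))$ lies in the algebraic variety defined by the degree-$(2\kappa+1)$ polynomials given by all $(2\kappa+1)\times(2\kappa+1)$ minors of each of the $2\kappa$ matrices (for $k\in[\kappa]$) $$\begin{pmatrix}0&P_{\cdot\cdot k}&P_{\cdot+\cdot}\\-P_{\cdot\cdot k}^T&0&P_{+\cdot\cdot}\\-P_{\cdot+\cdot}^T&-P_{+\cdot\cdot}^T&0\end{pmatrix}\quad\text{and}\quad\begin{pmatrix}0&P_{\cdot+\cdot}^T&P_{+\cdot\cdot}^T\\-P_{\cdot+\cdot}&0&P_{\cdot\cdot k}\\-P_{+\cdot\cdot}&-P_{\cdot\cdot k}^T&0\end{pmatrix}.$$ That is, each of these $3\kappa\times 3\kappa$ matrices has rank at most $2\kappa$.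
   Context: A $\kappa$-state site pattern probability tensor on $X$ ($|X|=n$) is an $n$-way $\kappa\times\cdots\times\kappa$ array with one index per taxon, non-negative entries summing to 1. $P_Y$ is the marginalization to $Y\subseteq X$; $\psi^+|_Y$ is the induced rooted subtree; a 2-clade is a pair of leaves that are exactly the leaf descendants of some vertex. $\mathrm{UE}_\kappa(\psi^+)$: all such tensors $P$ such that for every $Y\subseteq X$ and every 2-clade $\{x,y\}$ of $\psi^+|_Y$, $P_Y$ is invariant under exchanging the $x$ and $y$ indices. For a $\kappa\times\kappa$ matrix $M$, $P*_kM$ is the tensor whose entry at $(i_1,\dots,i_n)$ is the $i_k$-th entry of $vM$, $v$ the row vector obtained by fixing all indices $\ell\ne k$ to $i_\ell$; $P*(M_1,\dots,M_n)=(\cdots(P*_1M_1)\cdots)*_nM_n$. $\mathrm{EE}_\kappa(\psi^+)$: all $\kappa$-state site pattern probability tensors $P$ such that $P*(M_1,\dots,M_n)=\tilde P$ for some non-singular Markov matrices $M_i$ and some non-negative $\tilde P\in\mathrm{UE}_\kappa(\psi^+)$. For a 3-way tensor $P=(p_{ijk})$ with indices ordered $a,b,c$: $P_{+\cdot\cdot}$ has $(j,k)$-entry $\sum_ip_{ijk}$; $P_{\cdot+\cdot}$ has $(i,k)$-entry $\sum_jp_{ijk}$; $P_{\cdot\cdot k}$ has $(i,j)$-entry $p_{ijk}$; $^T$ is transpose. *)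

From HB Require Import structures.
From mathcomp Require Import all_boot all_order all_algebra all_fingroup.
Set Implicit Arguments. Unset Strict Implicit. Unset Printing Implicit Defensive.
Import Order.TTheory GRing.Theory Num.Theory.
Local Open Scope ring_scope.

Section Tensors.
Variables (R : realFieldType) (n kappa : nat).

(* A site pattern (index) assigns a state in 'I_kappa to each taxon in 'I_n. *)
Definition site := {ffun 'I_n -> 'I_kappa}.

Definition tensor := site -> R.

Definition prob_tensor (P : tensor) : Prop :=
  (forall i, 0 <= P i) /\ \sum_(i : site) P i = 1.

(* Marginalization P_Y, represented as a tensor on all of X whose value only
   depends on the coordinates in Y. *)
Definition marg (Y : {set 'I_n}) (P : tensor) : tensor :=
  fun i => \sum_(j : site | [forall t in Y, j t == i t]) P j.

Definition swap_site (x y : 'I_n) (i : site) : site := [ffun t => i (tperm x y t)].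

(* A rooted tree on X = 'I_n, given by its clusters: the sets of leaf
   descendants of its vertices. *)
Definition rtree := {set {set 'I_n}}.

(* {x,y} is a 2-clade of the induced rooted subtree psi|_Y: the clusters of
   psi|_Y are exactly the non-empty sets C :&: Y for C a cluster of psi. *)
Definition is_2clade (psi : rtree) (Y : {set 'I_n}) (x y : 'I_n) : Prop :=
  x != y /\ exists2 C, C \in psi & C :&: Y = [set x; y].

Definition UE (psi : rtree) (P : tensor) : Prop :=
  prob_tensor P /\
  forall (Y : {set 'I_n}) (x y : 'I_n), is_2clade psi Y x y ->
    forall i : site, marg Y P (swap_site x y i) = marg Y P i.

Definition mode_mul (k : 'I_n) (M : 'M[R]_kappa) (P : tensor) : tensor :=
  fun i => \sum_(l : 'I_kappa) P [ffun t => if t == k then l else i t] * M l (i k).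

Definition multi_mul (P : tensor) (Ms : 'I_n -> 'M[R]_kappa) : tensor :=
  foldl (fun Q k => mode_mul k (Ms k) Q) P (enum 'I_n).

Definition markov (M : 'M[R]_kappa) : Prop :=
  (forall i j, 0 <= M i j) /\ forall i, \sum_j M i j = 1.

Definition EE (psi : rtree) (P : tensor) : Prop :=
  prob_tensor P /\
  exists Ms : 'I_n -> 'M[R]_kappa,
    (forall t, markov (Ms t) /\ Ms t \in unitmx) /\
    exists Pt : tensor, (forall i, 0 <= Pt i) /\ UE psi Pt /\
      forall i, multi_mul P Ms i = Pt i.

End Tensors.

Definition ta : 'I_3 := @Ordinal 3 0 isT.
Definition tb : 'I_3 := @Ordinal 3 1 isT.
Definition tc : 'I_3 := @Ordinal 3 2 isT.

Definition tree_ab_c : rtree 3 :=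
  [set [set ta]; [set tb]; [set tc]; [set ta; tb]; [set ta; tb; tc]].

Section ThreeWay.
Variables (R : realFieldType) (kappa : nat).

Definition idx3 (i j k : 'I_kappa) : site 3 kappa :=
  [ffun t => tnth [tuple i; j; k] t].

(* P_{..k} : (i,j)-entry p_{ijk} *)
Definition slice3 (P : tensor R 3 kappa) (k : 'I_kappa) : 'M[R]_kappa :=
  \matrix_(i, j) P (idx3 i j k).
(* P_{+..} : (j,k)-entry sum_i p_{ijk} *)
Definition margA (P : tensor R 3 kappa) : 'M[R]_kappa :=
  \matrix_(j, k) \sum_(i : 'I_kappa) P (idx3 i j k).
(* P_{.+.} : (i,k)-entry sum_j p_{ijk} *)
Definition margB (P : tensor R 3 kappa) : 'M[R]_kappa :=
  \matrix_(i, k) \sum_(j : 'I_kappa) P (idx3 i j k).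

Definition block3 (A11 A12 A13 A21 A22 A23 A31 A32 A33 : 'M[R]_kappa)
  : 'M[R]_(kappa + (kappa + kappa)) :=
  col_mx (row_mx A11 (row_mx A12 A13))
    (col_mx (row_mx A21 (row_mx A22 A23)) (row_mx A31 (row_mx A32 A33))).

Definition flatM1 (P : tensor R 3 kappa) (k : 'I_kappa) :=
  block3 0 (slice3 P k) (margB P)
         (- (slice3 P k)^T) 0 (margA P)
         (- (margB P)^T) (- (margA P)^T) 0.

Definition flatM2 (P : tensor R 3 kappa) (k : 'I_kappa) :=
  block3 0 (margB P)^T (margA P)^T
         (- margB P) 0 (slice3 P k)
         (- margA P) (- (slice3 P k)^T) 0.

End ThreeWay.

(* After the change of coordinates P -> P * (M_a, M_b, M_c), which transforms the
   flattening congruently, the tensor is symmetric in a and b: its slices are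
   symmetric and its two margins agree.  Since the c-slices of the new tensor span
   those of the old one (M_c is invertible), the flattening becomes, up to
   congruence, the skew block matrix [[0,S,B],[-S,0,B],[-B^T,-B^T,0]] with S
   symmetric; one block elimination turns it into a matrix with a zero 2x2 corner,
   of rank at most 2 kappa.  The second flattening is a signed block permutation of
   the first. *)
From HB Require Import structures.
From mathcomp Require Import all_boot all_order all_algebra all_fingroup.
From mathcomp Require Import ring.
Set Implicit Arguments. Unset Strict Implicit. Unset Printing Implicit Defensive.
Import Order.TTheory GRing.Theory Num.Theory.
Local Open Scope ring_scope.

Lemma rank_block_mx0dr (F : fieldType) (m1 m2 n1 n2 : nat)
  (Aul : 'M[F]_(m1, n1)) (Aur : 'M_(m1, n2)) (Adl : 'M_(m2, n1)) :
  (\rank (block_mx Aul Aur Adl (0 : 'M_(m2, n2))) <= m1 + n1)%N.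
Proof.
rewrite block_mxEv -addsmxE; apply: leq_trans (mxrank_adds_leqif _ _) _.
by rewrite rank_row_mx0 leq_add ?rank_leq_row ?rank_leq_col.
Qed.

Section Block3.
Variables (R : realFieldType) (kappa : nat).
Local Notation M := 'M[R]_kappa.
Implicit Types A B X Y Z S N : M.

Lemma block3E A11 A12 A13 A21 A22 A23 A31 A32 A33 :
  block3 A11 A12 A13 A21 A22 A23 A31 A32 A33 =
  block_mx A11 (row_mx A12 A13) (col_mx A21 A31) (block_mx A22 A23 A32 A33).
Proof. by rewrite /block3 block_mxEv [block_mx A22 _ _ _]block_mxEv -block_mxEh block_mxEv. Qed.

Lemma mul_block3 A11 A12 A13 A21 A22 A23 A31 A32 A33
  B11 B12 B13 B21 B22 B23 B31 B32 B33 :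
  block3 A11 A12 A13 A21 A22 A23 A31 A32 A33 *m
  block3 B11 B12 B13 B21 B22 B23 B31 B32 B33 =
  block3 (A11 *m B11 + A12 *m B21 + A13 *m B31)
         (A11 *m B12 + A12 *m B22 + A13 *m B32)
         (A11 *m B13 + A12 *m B23 + A13 *m B33)
         (A21 *m B11 + A22 *m B21 + A23 *m B31)
         (A21 *m B12 + A22 *m B22 + A23 *m B32)
         (A21 *m B13 + A22 *m B23 + A23 *m B33)
         (A31 *m B11 + A32 *m B21 + A33 *m B31)
         (A31 *m B12 + A32 *m B22 + A33 *m B32)
         (A31 *m B13 + A32 *m B23 + A33 *m B33).
Proof.
rewrite !block3E mulmx_block mul_row_col mul_mx_row mul_row_block mul_col_mx.
by rewrite mul_block_col mul_col_row mulmx_block add_row_mx add_col_mx add_block_mx !addrA.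
Qed.

Lemma tr_block3 A11 A12 A13 A21 A22 A23 A31 A32 A33 :
  (block3 A11 A12 A13 A21 A22 A23 A31 A32 A33)^T =
  block3 A11^T A21^T A31^T A12^T A22^T A32^T A13^T A23^T A33^T.
Proof. by rewrite !block3E tr_block_mx tr_row_mx tr_col_mx tr_block_mx. Qed.

Lemma rank_block3_corner0 A11 A12 A13 A21 A31 :
  (\rank (block3 A11 A12 A13 A21 0 0 A31 0 0) <= 2 * kappa)%N.
Proof. by rewrite block3E block_mx0 mul2n -addnn rank_block_mx0dr. Qed.

Definition skew3 X Y Z := block3 0 X Y (- X^T) 0 Z (- Y^T) (- Z^T) 0.

Definition diag3 N1 N2 N3 := block3 N1 0 0 0 N2 0 0 0 N3.

Lemma skew3_congr N1 N2 N3 X Y Z :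
  (diag3 N1 N2 N3)^T *m skew3 X Y Z *m diag3 N1 N2 N3 =
  skew3 (N1^T *m X *m N2) (N1^T *m Y *m N3) (N2^T *m Z *m N3).
Proof.
rewrite /skew3 /diag3 tr_block3 !mul_block3 !trmx0 !(mul0mx, mulmx0, addr0, add0r).
by rewrite !(mulmxN, mulNmx) !trmx_mul !trmxK !mulmxA.
Qed.

Lemma congr_invmxK N N' X : N \in unitmx -> N' \in unitmx ->
  (invmx N)^T *m (N^T *m X *m N') *m invmx N' = X.
Proof.
move=> uN uN'.
by rewrite !mulmxA -trmx_mul mulmxV // trmx1 mul1mx -mulmxA mulmxV // mulmx1.
Qed.

Lemma rank_skew3_congr N1 N2 N3 X Y Z :
  N1 \in unitmx -> N2 \in unitmx -> N3 \in unitmx ->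
  \rank (skew3 (N1^T *m X *m N2) (N1^T *m Y *m N3) (N2^T *m Z *m N3)) =
  \rank (skew3 X Y Z).
Proof.
move=> u1 u2 u3; set G' := skew3 _ _ _.
have rank_congr_le D G : (\rank (D^T *m G *m D) <= \rank G)%N.
  exact: leq_trans (mxrankM_maxl _ _) (mxrankM_maxr _ _).
apply/eqP; rewrite eqn_leq {1}/G' -skew3_congr rank_congr_le /=.
have -> : skew3 X Y Z = (diag3 (invmx N1) (invmx N2) (invmx N3))^T *m G' *m
                         diag3 (invmx N1) (invmx N2) (invmx N3).
  by rewrite skew3_congr !congr_invmxK.
exact: rank_congr_le.
Qed.

(* Adding the first block row to the second and the first block column to the
   second creates the zero corner. *)
Lemma rank_skew3_sym S B : S^T = S ->
  (\rank (skew3 S B B) <= 2 * kappa)%N.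
Proof.
move=> symS.
have -> : skew3 S B B =
  block3 1%:M 0 0 1%:M 1%:M 0 0 0 1%:M *m
  (block3 0 S B (- S) 0 0 (- B^T) 0 0 *m block3 1%:M 1%:M 0 0 1%:M 0 0 0 1%:M).
  rewrite /skew3 !mul_block3 !(mul0mx, mulmx0, mul1mx, mulmx1, addr0, add0r) symS.
  by rewrite subrr.
apply: leq_trans (mxrankM_maxr _ _) _; apply: leq_trans (mxrankM_maxl _ _) _.
exact: rank_block3_corner0.
Qed.

End Block3.

Section Flattenings.
Variables (R : realFieldType) (kappa : nat).
Implicit Types (P : tensor R 3 kappa) (k : 'I_kappa).

Lemma flatM1E P k : flatM1 P k = skew3 (slice3 P k) (margB P) (margA P).
Proof. by []. Qed.

(* The second flattening is the first one with its block rows and columns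
   cyclically permuted (c, a, b) and the c-block negated. *)
Lemma rank_flatM2_le P k : (\rank (flatM2 P k) <= \rank (flatM1 P k))%N.
Proof.
have -> : flatM2 P k = block3 0 0 (- 1%:M) 1%:M 0 0 0 1%:M 0 *m flatM1 P k *m
                       block3 0 1%:M 0 0 0 1%:M (- 1%:M) 0 0.
  rewrite /flatM2 /flatM1 !mul_block3.
  by rewrite !(mul0mx, mulmx0, mul1mx, mulmx1, mulNmx, mulmxN, oppr0, addr0, add0r, opprK).
exact: leq_trans (mxrankM_maxl _ _) (mxrankM_maxr _ _).
Qed.

End Flattenings.

Section Index3.
Variable kappa : nat.
Implicit Types i j k l : 'I_kappa.

Lemma idx3_a i j k : idx3 i j k ta = i. Proof. by rewrite ffunE. Qed.
Lemma idx3_b i j k : idx3 i j k tb = j. Proof. by rewrite ffunE. Qed.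
Lemma idx3_c i j k : idx3 i j k tc = k. Proof. by rewrite ffunE. Qed.

Lemma set_idx3_a i j k l :
  [ffun t => if t == ta then l else idx3 i j k t] = idx3 l j k.
Proof. by apply/ffunP => -[[|[|[|t]]] Ht]; rewrite !ffunE. Qed.
Lemma set_idx3_b i j k l :
  [ffun t => if t == tb then l else idx3 i j k t] = idx3 i l k.
Proof. by apply/ffunP => -[[|[|[|t]]] Ht]; rewrite !ffunE. Qed.
Lemma set_idx3_c i j k l :
  [ffun t => if t == tc then l else idx3 i j k t] = idx3 i j l.
Proof. by apply/ffunP => -[[|[|[|t]]] Ht]; rewrite !ffunE. Qed.

Lemma enum_ord3 : enum 'I_3 = [:: ta; tb; tc].
Proof. by apply: (inj_map val_inj); rewrite val_enum_ord. Qed.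

End Index3.

Section ChangeOfCoordinates.
Variables (R : realFieldType) (kappa : nat).
Variables (P : tensor R 3 kappa) (Ms : 'I_3 -> 'M[R]_kappa).
Implicit Types i j k : 'I_kappa.
Local Notation Pt := (multi_mul P Ms).

Lemma multi_mul3E i j k :
  Pt (idx3 i j k) =
  \sum_c \sum_b \sum_a P (idx3 a b c) * Ms ta a i * Ms tb b j * Ms tc c k.
Proof.
rewrite /multi_mul enum_ord3 /= /mode_mul.
apply: eq_bigr => c _; rewrite set_idx3_c idx3_c mulr_suml.
apply: eq_bigr => b _; rewrite set_idx3_b idx3_b !mulr_suml.
by apply: eq_bigr => a _; rewrite set_idx3_a idx3_a.
Qed.

Lemma slice3_multi_mul k :
  slice3 Pt k = \sum_c Ms tc c k *: ((Ms ta)^T *m slice3 P c *m Ms tb).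
Proof.
apply/matrixP => i j; rewrite mxE multi_mul3E summxE; apply: eq_bigr => c _.
rewrite !mxE mulr_sumr; apply: eq_bigr => b _.
rewrite !mxE !mulr_suml mulr_sumr; apply: eq_bigr => a _.
by rewrite !mxE; ring.
Qed.

Lemma margB_multi_mul : (forall b, \sum_j Ms tb b j = 1) ->
  margB Pt = (Ms ta)^T *m margB P *m Ms tc.
Proof.
move=> sumMb; apply/matrixP => i k; rewrite !mxE.
under eq_bigr => j _ do rewrite multi_mul3E.
rewrite exchange_big; apply: eq_bigr => c _.
rewrite exchange_big /=; under eq_bigr => b _ do rewrite exchange_big /=.
rewrite exchange_big /= !mxE mulr_suml; apply: eq_bigr => a _.
rewrite !mxE mulr_sumr mulr_suml; apply: eq_bigr => b _.
transitivity (\sum_j P (idx3 a b c) * Ms ta a i * Ms tc c k * Ms tb b j).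
  by apply: eq_bigr => j _; ring.
by rewrite -mulr_sumr sumMb; ring.
Qed.

Lemma margA_multi_mul : (forall a, \sum_i Ms ta a i = 1) ->
  margA Pt = (Ms tb)^T *m margA P *m Ms tc.
Proof.
move=> sumMa; apply/matrixP => j k; rewrite !mxE.
under eq_bigr => i _ do rewrite multi_mul3E.
rewrite exchange_big; apply: eq_bigr => c _.
rewrite exchange_big /=; under eq_bigr => b _ do rewrite exchange_big /=.
rewrite !mxE mulr_suml; apply: eq_bigr => b _.
rewrite !mxE mulr_sumr mulr_suml; apply: eq_bigr => a _.
transitivity (\sum_i P (idx3 a b c) * Ms tb b j * Ms tc c k * Ms ta a i).
  by apply: eq_bigr => i _; ring.
by rewrite -mulr_sumr sumMa; ring.
Qed.

Lemma congr_slice3E k : Ms tc \in unitmx ->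
  (Ms ta)^T *m slice3 P k *m Ms tb = \sum_c invmx (Ms tc) c k *: slice3 Pt c.
Proof.
move=> uMc.
have delta c' : \sum_c invmx (Ms tc) c k * Ms tc c' c = (1%:M : 'M[R]_kappa) c' k.
  by rewrite -(mulmxV uMc) mxE; apply: eq_bigr => c _; rewrite mulrC.
under eq_bigr => c _ do rewrite slice3_multi_mul scaler_sumr.
rewrite exchange_big /=.
under eq_bigr => c' _ do (under eq_bigr => c _ do rewrite scalerA; rewrite -scaler_suml delta).
rewrite (bigD1 k) //= big1 ?addr0; first by rewrite mxE eqxx scale1r.
by move=> c' /negbTE ne; rewrite mxE ne scale0r.
Qed.

End ChangeOfCoordinates.

Section Symmetry.
Variables (R : realFieldType) (kappa : nat).
Implicit Types (Q : tensor R 3 kappa) (i j k : 'I_kappa).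

Definition ab_sym Q := forall i j k, Q (idx3 i j k) = Q (idx3 j i k).

Lemma marg_setT Q (s : site 3 kappa) : marg setT Q s = Q s.
Proof.
rewrite /marg (big_pred1 s) // => s' /=.
apply/forallP/eqP => [eq_s|->]; last by move=> t; rewrite eqxx implybT.
by apply/ffunP => t; move: (eq_s t); rewrite in_setT => /eqP.
Qed.

Lemma UE_ab_sym Q : UE tree_ab_c Q -> ab_sym Q.
Proof.
case=> _ invQ i j k.
have clade_ab : is_2clade tree_ab_c setT ta tb.
  split=> //; exists [set ta; tb]; last by rewrite setIT.
  by rewrite !inE eqxx !orbT.
have := invQ _ _ _ clade_ab (idx3 i j k); rewrite !marg_setT => <-.
congr Q; apply/ffunP => -[[|[|[|t]]] Ht]; rewrite !ffunE //=.
all: by rewrite permE.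
Qed.

Lemma slice3_sym Q k : ab_sym Q -> (slice3 Q k)^T = slice3 Q k.
Proof. by move=> symQ; apply/matrixP => i j; rewrite !mxE symQ. Qed.

Lemma margA_sym Q : ab_sym Q -> margA Q = margB Q.
Proof.
by move=> symQ; apply/matrixP => j k; rewrite !mxE; apply: eq_bigr => i _; rewrite symQ.
Qed.

End Symmetry.

Theorem corollary6p4 (R : realFieldType) (kappa : nat) (hk : (2 <= kappa)%N)
  (P : tensor R 3 kappa) (hP : EE tree_ab_c P) :
  forall k : 'I_kappa,
    (\rank (flatM1 P k) <= 2 * kappa)%N /\ (\rank (flatM2 P k) <= 2 * kappa)%N.
Proof.
case: hP => _ [Ms [hMs [Pt [_ [/UE_ab_sym symPt eqPt]]]]] k.
have symQ : ab_sym (multi_mul P Ms) by move=> i j c; rewrite !eqPt symPt.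
have [[_ sumMa] uMa] := hMs ta.
have [[_ sumMb] uMb] := hMs tb.
have [_ uMc] := hMs tc.
have rank1 : (\rank (flatM1 P k) <= 2 * kappa)%N.
  rewrite flatM1E -(rank_skew3_congr _ _ _ uMa uMb uMc).
  rewrite -margB_multi_mul // -margA_multi_mul // margA_sym //.
  apply: rank_skew3_sym; rewrite congr_slice3E // linear_sum.
  by apply: eq_bigr => c _; rewrite linearZ /= slice3_sym.
by split; last exact: leq_trans (rank_flatM2_le P k) rank1.
Qed.
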